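(* The ``vanilla'' meta-interpreter $M_0$ preserves LD-termination: for every definite program $P$ and every atomic query $Q_0\in B^E_P$, the LD-tree of $P\cup\{Q_0\}$ is finite if and only if the LD-tree of $(M_0\cup\mathit{ce}(P))\cup\{\mathit{solve}(Q_0)\}$ is finite.
   Context: Logic programs are definite; the LD-tree of $P\cup\{Q\}$ is the SLD-tree under Prolog's left-to-right selection rule. $B^E_P$ is the set of atoms of the language of $P$ modulo variance. Clause encoding: a clause body $B_1,\dots,B_n$ ($n\ge1$) is represented as the term $(B_1,(B_2,\dots,B_n))$ built with a binary functor $,/2$, and an empty body by the constant $\mathit{true}$. The clause-encoding $\mathit{ce}(P)$ is the set of facts $\mathit{clause}(H,B)$, one for each clause $H\leftarrow B$ of $P$. The symbols $,/2$, $\mathit{clause}$, $\mathit{solve}$ do not occur in the language of $P$. The ``vanilla'' meta-interpreter $M_0$ is the program $\mathit{solve}(\mathit{true}).$ $\mathit{solve}((A,B))\leftarrow \mathit{solve}(A),\mathit{solve}(B).$ $\mathit{solve}(H)\leftarrow \mathit{clause}(H,B),\mathit{solve}(B).$ *)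

From Stdlib Require Import List.
Import ListNotations.

(* Symbols: user symbols (the language of P) plus the reserved symbols
   ,/2, true, clause, solve which do not occur in the language of P. *)
Inductive sym : Type :=
  | Usr (n : nat)
  | Comma
  | TrueS
  | ClauseS
  | SolveS.

(* Terms; atoms are terms headed by a (predicate) symbol. *)
Inductive term : Type :=
  | Var (x : nat)
  | Fun (f : sym) (args : list term).

Definition is_usr (f : sym) : Prop :=
  match f with Usr _ => True | _ => False end.

Fixpoint user_term (t : term) : Prop :=
  match t with
  | Var _ => True
  | Fun f ts =>
      is_usr f /\
      (fix go (l : list term) : Prop :=
         match l with [] => True | u :: l' => user_term u /\ go l' end) ts
  end.

Definition user_atom (t : term) : Prop :=
  exists p args, t = Fun (Usr p) args /\ user_term t.

Fixpoint occurs (x : nat) (t : term) : Prop :=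
  match t with
  | Var y => x = y
  | Fun _ ts =>
      (fix go (l : list term) : Prop :=
         match l with [] => False | u :: l' => occurs x u \/ go l' end) ts
  end.

Definition subst := nat -> term.

Fixpoint apply (s : subst) (t : term) : term :=
  match t with
  | Var x => s x
  | Fun f ts => Fun f (map (apply s) ts)
  end.

Definition unifier (s : subst) (t1 t2 : term) : Prop := apply s t1 = apply s t2.

Definition mgu (s : subst) (t1 t2 : term) : Prop :=
  unifier s t1 t2 /\
  forall s', unifier s' t1 t2 -> exists d, forall x, s' x = apply d (s x).

Definition clause : Type := (term * list term)%type.
Definition program : Type := list clause.
Definition goal : Type := list term.

Definition user_program (P : program) : Prop :=
  forall c, In c P -> user_atom (fst c) /\ forall b, In b (snd c) -> user_atom b.

Definition rename (r : nat -> nat) (t : term) : term := apply (fun x => Var (r x)) t.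

Definition occurs_goal (x : nat) (G : goal) : Prop := exists A, In A G /\ occurs x A.

(* One LD-resolution step (leftmost selection rule), using a variant of a
   program clause standardized apart from the goal and an mgu. *)
Definition ld_step (P : program) (G G' : goal) : Prop :=
  exists A rest H B r s,
    G = A :: rest /\
    In (H, B) P /\
    (forall x y, r x = r y -> x = y) /\
    (forall x, occurs_goal x (rename r H :: map (rename r) B) -> ~ occurs_goal x G) /\
    mgu s A (rename r H) /\
    G' = map (apply s) (map (rename r) B ++ rest).

(* The LD-tree of P u {G} is finite: every LD-derivation from G is finite
   (the LD-tree is finitely branching up to variance). *)
Inductive ld_finite (P : program) : goal -> Prop :=
  | ld_fin : forall G, (forall G', ld_step P G G' -> ld_finite P G') -> ld_finite P G.

Definition true_t : term := Fun TrueS [].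
Definition comma (a b : term) : term := Fun Comma [a; b].

Fixpoint enc_body (B : list term) : term :=
  match B with
  | [] => true_t
  | [b] => b
  | b :: B' => comma b (enc_body B')
  end.

Definition solve (t : term) : term := Fun SolveS [t].
Definition clause_at (h b : term) : term := Fun ClauseS [h; b].

Definition ce (P : program) : program :=
  map (fun c => (clause_at (fst c) (enc_body (snd c)), [])) P.

Definition M0 : program :=
  [ (solve true_t, []);
    (solve (comma (Var 0) (Var 1)), [solve (Var 0); solve (Var 1)]);
    (solve (Var 0), [clause_at (Var 0) (Var 1); solve (Var 1)]) ].

From Stdlib Require Import List Arith Lia ClassicalEpsilon FinFun Wf_nat.
Import ListNotations.

(* A meta goal [solve(B1), ..., solve(Bk)] of [M0 ++ ce P], each [Bi] an encoded
   clause body, stands for the object goal [B1 ++ ... ++ Bk].  Resolving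
   [solve(true)] or [solve((A, B))] is bookkeeping: it decreases a weight and keeps
   the object goal.  Resolving [solve(A)] for an atom [A] gives
   [clause(A, X), solve(X)], whose resolvents through [ce(P)] are exactly the
   encodings of the LD-resolvents of [A] in [P].  So every object derivation lifts
   to a meta derivation, and every meta derivation projects to an object one with
   finitely many bookkeeping steps in between.  LD-resolvents are only determined
   up to the renaming of the clause and the choice of the mgu, so the simulation
   works up to variants, under which LD-finiteness is invariant. *)

(** * Terms and substitutions *)

Fixpoint term_ind_nested (Pt : term -> Prop) (HV : forall x, Pt (Var x))
  (HF : forall f ts, Forall Pt ts -> Pt (Fun f ts)) (t : term) : Pt t :=
  match t with
  | Var x => HV x
  | Fun f ts => HF f ts
      ((fix go (l : list term) : Forall Pt l :=
          match l with
          | [] => Forall_nil _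
          | u :: l' => Forall_cons _ (term_ind_nested Pt HV HF u) (go l')
          end) ts)
  end.

Lemma occurs_Fun x f ts : occurs x (Fun f ts) <-> exists u, In u ts /\ occurs x u.
Proof.
  simpl. induction ts as [|u ts IH]; simpl.
  - split; [tauto | intros [u [[] _]]].
  - rewrite IH. split.
    + intros [H | [v [Hv Hx]]]; eauto.
    + intros [v [[<- | Hv] Hx]]; eauto.
Qed.

Lemma apply_ext s1 s2 t :
  (forall x, occurs x t -> s1 x = s2 x) -> apply s1 t = apply s2 t.
Proof.
  induction t as [x | f ts IH] using term_ind_nested; intros H.
  - apply H. reflexivity.
  - simpl. f_equal. apply map_ext_in. intros u Hu.
    rewrite Forall_forall in IH. apply IH; auto.
    intros x Hx. apply H, occurs_Fun. eauto.
Qed.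

Lemma apply_comp s1 s2 t :
  apply s1 (apply s2 t) = apply (fun x => apply s1 (s2 x)) t.
Proof.
  induction t as [x | f ts IH] using term_ind_nested; [reflexivity |].
  simpl. rewrite map_map. f_equal. apply map_ext_in.
  rewrite Forall_forall in IH. auto.
Qed.

Lemma apply_Var t : apply Var t = t.
Proof.
  induction t as [x | f ts IH] using term_ind_nested; [reflexivity |].
  simpl. f_equal. rewrite Forall_forall in IH.
  rewrite <- (map_id ts) at 2. apply map_ext_in. auto.
Qed.

Lemma occurs_apply x s t :
  occurs x (apply s t) <-> exists y, occurs y t /\ occurs x (s y).
Proof.
  induction t as [z | f ts IH] using term_ind_nested.
  - simpl. split; [eauto | intros [y [-> H]]; auto].
  - simpl apply. rewrite occurs_Fun. rewrite Forall_forall in IH. split.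
    + intros [u [Hu Hx]]. apply in_map_iff in Hu. destruct Hu as [v [<- Hv]].
      apply IH in Hx; auto. destruct Hx as [y [Hy Hxy]].
      exists y. split; auto. apply occurs_Fun. eauto.
    + intros [y [Hy Hxy]]. apply occurs_Fun in Hy. destruct Hy as [u [Hu Hyu]].
      exists (apply s u). split; [apply in_map; auto | apply IH; eauto].
Qed.

Lemma occurs_rename x r t : occurs x (rename r t) <-> exists y, occurs y t /\ x = r y.
Proof. unfold rename. rewrite occurs_apply. reflexivity. Qed.

Lemma apply_eq_occurs s1 s2 t x : apply s1 t = apply s2 t -> occurs x t -> s1 x = s2 x.
Proof.
  induction t as [z | f ts IH] using term_ind_nested; intros H Hx.
  - simpl in *. subst. auto.
  - simpl in H. injection H as H. apply occurs_Fun in Hx.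
    destruct Hx as [u [Hu Hx]]. rewrite Forall_forall in IH. apply (IH u Hu); auto.
    clear -H Hu. induction ts as [| v ts IHts]; simpl in *; [destruct Hu |].
    injection H as H1 H2. destruct Hu as [<- | Hu]; auto.
Qed.

Lemma term_vars_bounded t : exists N, forall x, occurs x t -> x < N.
Proof.
  induction t as [x | f ts IH] using term_ind_nested.
  - exists (S x). simpl. lia.
  - induction IH as [| u ts [N1 H1] _ [N2 H2]].
    + exists 0. intros x Hx. apply occurs_Fun in Hx. destruct Hx as [? [[] _]].
    + exists (N1 + N2). intros x Hx. apply occurs_Fun in Hx.
      destruct Hx as [v [[<- | Hv] Hx]].
      * specialize (H1 x Hx). lia.
      * enough (x < N2) by lia. apply H2, occurs_Fun. eauto.
Qed.

Definition upd (s : subst) (x : nat) (t : term) : subst :=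
  fun y => if Nat.eq_dec y x then t else s y.

Lemma apply_upd_notin s x t u : ~ occurs x u -> apply (upd s x t) u = apply s u.
Proof.
  intros Hx. apply apply_ext. intros y Hy. unfold upd.
  destruct (Nat.eq_dec y x); [subst; contradiction | reflexivity].
Qed.

Lemma upd_eq s x t : upd s x t x = t.
Proof. unfold upd. destruct (Nat.eq_dec x x); congruence. Qed.

Lemma upd_neq s x y t : y <> x -> upd s x t y = s y.
Proof. unfold upd. destruct (Nat.eq_dec y x); congruence. Qed.

Lemma mgu_match s t p :
  apply s p = t -> (forall x, ~ occurs x p -> s x = Var x) ->
  (forall x, occurs x t -> ~ occurs x p) -> mgu s t p.
Proof.
  intros Hp Hout Hdisj.
  assert (Ht : apply s t = t).
  { rewrite <- (apply_Var t) at 2. apply apply_ext. intros x Hx. apply Hout, Hdisj, Hx. }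
  split; [unfold unifier; rewrite Ht, Hp; reflexivity |].
  intros u Hu. exists u. intros x.
  destruct (excluded_middle_informative (occurs x p)) as [Hx | Hx];
    [| rewrite Hout; auto].
  apply (apply_eq_occurs u (fun y => apply u (s y)) p); auto.
  rewrite <- apply_comp, Hp. symmetry. exact Hu.
Qed.

Lemma occurs_goal_cons x A G :
  occurs_goal x (A :: G) <-> occurs x A \/ occurs_goal x G.
Proof.
  unfold occurs_goal. simpl. split.
  - intros [B [[<- | HB] Hx]]; eauto.
  - intros [H | [B [HB Hx]]]; eauto.
Qed.

Lemma occurs_goal_app x G1 G2 :
  occurs_goal x (G1 ++ G2) <-> occurs_goal x G1 \/ occurs_goal x G2.
Proof.
  unfold occurs_goal. split.
  - intros [B [HB Hx]]. apply in_app_or in HB. destruct HB; eauto.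
  - intros [[B [HB Hx]] | [B [HB Hx]]]; exists B; split; auto; apply in_or_app; auto.
Qed.

Lemma occurs_goal_map x s G :
  occurs_goal x (map (apply s) G) <-> exists y, occurs_goal y G /\ occurs x (s y).
Proof.
  unfold occurs_goal. split.
  - intros [B [HB Hx]]. apply in_map_iff in HB. destruct HB as [C [<- HC]].
    apply occurs_apply in Hx. destruct Hx as [y [Hy Hxy]]. eauto.
  - intros [y [[C [HC Hy]] Hxy]]. exists (apply s C).
    split; [apply in_map; auto | apply occurs_apply; eauto].
Qed.

Lemma occurs_goal_rename x r G :
  occurs_goal x (map (rename r) G) <-> exists y, occurs_goal y G /\ x = r y.
Proof.
  unfold rename. rewrite occurs_goal_map. split; intros [y [Hy E]]; exists y; auto.
Qed.

Lemma map_apply_ext s1 s2 G :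
  (forall x, occurs_goal x G -> s1 x = s2 x) -> map (apply s1) G = map (apply s2) G.
Proof.
  intros H. apply map_ext_in. intros u Hu. apply apply_ext.
  intros x Hx. apply H. exists u. auto.
Qed.

Lemma map_apply_comp s1 s2 G :
  map (apply s1) (map (apply s2) G) = map (apply (fun x => apply s1 (s2 x))) G.
Proof. rewrite map_map. apply map_ext. intros. apply apply_comp. Qed.

Lemma map_apply_Var G : map (apply Var) G = G.
Proof. rewrite <- (map_id G) at 2. apply map_ext. apply apply_Var. Qed.

Lemma map_apply_fixed_Var s G x : map (apply s) G = G -> occurs_goal x G -> s x = Var x.
Proof.
  intros E [u [Hu Hx]]. apply (apply_eq_occurs s Var u); auto. rewrite apply_Var.
  clear Hx. induction G as [| v G IHG]; simpl in *; [destruct Hu |].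
  injection E as E1 E2. destruct Hu as [<- | Hu]; auto.
Qed.

Lemma goal_vars_bounded G : exists N, forall x, occurs_goal x G -> x < N.
Proof.
  induction G as [| A G [N2 H2]].
  - exists 0. intros x [A [[] _]].
  - destruct (term_vars_bounded A) as [N1 H1]. exists (N1 + N2).
    intros x Hx. apply occurs_goal_cons in Hx. destruct Hx as [Hx | Hx].
    + specialize (H1 x Hx). lia.
    + specialize (H2 x Hx). lia.
Qed.

(** * Variants *)

Definition variant (G1 G2 : goal) : Prop :=
  (exists th, G1 = map (apply th) G2) /\ (exists et, G2 = map (apply et) G1).

Lemma variant_refl G : variant G G.
Proof. split; exists Var; rewrite map_apply_Var; auto. Qed.

Lemma variant_sym G1 G2 : variant G1 G2 -> variant G2 G1.
Proof. intros [H1 H2]; split; auto. Qed.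

Lemma variant_trans G1 G2 G3 : variant G1 G2 -> variant G2 G3 -> variant G1 G3.
Proof.
  intros [[a Ha] [b Hb]] [[c Hc] [d Hd]]. split.
  - exists (fun x => apply a (c x)). rewrite Ha, Hc, map_apply_comp. auto.
  - exists (fun x => apply d (b x)). rewrite Hd, Hb, map_apply_comp. auto.
Qed.

Lemma variant_map_apply s d G :
  (forall x, occurs_goal x G -> apply d (s x) = Var x) -> variant (map (apply s) G) G.
Proof.
  intros H. split; [exists s; auto |].
  exists d. rewrite map_apply_comp, <- (map_apply_Var G) at 1.
  apply map_apply_ext. intros x Hx. symmetry. auto.
Qed.

Lemma variant_rename_double G : variant (map (rename (Nat.mul 2)) G) G.
Proof.
  apply (variant_map_apply (fun x => Var (2 * x)) (fun x => Var (Nat.div2 x))).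
  intros x _. cbn [apply]. rewrite Nat.div2_double. reflexivity.
Qed.

Lemma mgu_unique_variant s s' t1 t2 K :
  mgu s t1 t2 -> mgu s' t1 t2 -> variant (map (apply s) K) (map (apply s') K).
Proof.
  intros [Hu Hg] [Hu' Hg']. destruct (Hg s' Hu') as [d Hd]. destruct (Hg' s Hu) as [e He].
  split; [exists e | exists d]; rewrite map_apply_comp; apply map_apply_ext; auto.
Qed.

(* Agrees with [g] on [V] up to the renaming [x |-> 2x] and sends every other
   variable to a fresh odd one, so that it is a genuine mgu as soon as [g] is
   most general among unifiers considered only on [V]. *)
Definition restrict_subst (V : nat -> Prop) (g : subst) : subst :=
  fun x => if excluded_middle_informative (V x)
           then rename (Nat.mul 2) (g x) else Var (S (2 * x)).

Lemma apply_restrict_subst V g u :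
  (forall x, occurs x u -> V x) ->
  apply (restrict_subst V g) u = rename (Nat.mul 2) (apply g u).
Proof.
  intros H. unfold rename. rewrite apply_comp. apply apply_ext. intros x Hx.
  unfold restrict_subst. destruct (excluded_middle_informative (V x)); auto.
  exfalso; auto.
Qed.

Lemma mgu_restrict_subst (V : nat -> Prop) g t1 t2 :
  (forall x, occurs x t1 -> V x) -> (forall x, occurs x t2 -> V x) ->
  apply g t1 = apply g t2 ->
  (forall u, unifier u t1 t2 -> exists d, forall x, V x -> u x = apply d (g x)) ->
  mgu (restrict_subst V g) t1 t2.
Proof.
  intros H1 H2 Hu Hg. split.
  - unfold unifier. rewrite !apply_restrict_subst, Hu by auto. reflexivity.
  - intros u Hu'. destruct (Hg u Hu') as [d Hd].
    exists (fun z => if Nat.even z then d (Nat.div2 z) else u (Nat.div2 z)).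
    intros x. unfold restrict_subst.
    destruct (excluded_middle_informative (V x)) as [Hv | Hv].
    + rewrite Hd by auto. unfold rename. rewrite apply_comp. apply apply_ext.
      intros y _. cbn [apply]. rewrite Nat.even_even, Nat.div2_double. reflexivity.
    + cbn [apply]. rewrite Nat.even_succ, <- Nat.negb_even, Nat.even_even.
      cbn [negb]. rewrite Nat.div2_succ_double. reflexivity.
Qed.

(* The mgu of [a2, b2] is the mgu of [a1, b1] transported along the variance. *)
Lemma mgu_variant a1 b1 K1 a2 b2 K2 s :
  variant (a1 :: b1 :: K1) (a2 :: b2 :: K2) -> mgu s a1 b1 ->
  exists s2, mgu s2 a2 b2 /\ variant (map (apply s) K1) (map (apply s2) K2).
Proof.
  set (G2 := a2 :: b2 :: K2). intros [[th Hth] [et Het]] [Hu Hg].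
  assert (Hid : forall x, occurs_goal x G2 -> apply et (th x) = Var x).
  { intros x. apply (map_apply_fixed_Var (fun y => apply et (th y))).
    rewrite <- map_apply_comp, <- Hth. auto. }
  assert (HG2 : forall u, In u G2 -> forall x, occurs x u -> occurs_goal x G2).
  { intros u Hu' x Hx. exists u. auto. }
  injection Hth as Ha1 Hb1 HK1. injection Het as Ha2 Hb2 HK2.
  set (g := fun x => apply s (th x)).
  exists (restrict_subst (fun x => occurs_goal x G2) g). split.
  - apply mgu_restrict_subst; [apply HG2; simpl; auto .. | |].
    + unfold g. rewrite <- !apply_comp, <- Ha1, <- Hb1. exact Hu.
    + intros u Hu2. destruct (Hg (fun x => apply u (et x))) as [d Hd].
      { unfold unifier. rewrite <- !apply_comp, <- Ha2, <- Hb2. exact Hu2. }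
      exists d. intros x Hx. unfold g. rewrite apply_comp.
      rewrite (apply_ext _ (fun y => apply u (et y))) by (intros; symmetry; auto).
      rewrite <- apply_comp, Hid; auto.
  - assert (E : map (apply (restrict_subst (fun x => occurs_goal x G2) g)) K2 =
                map (rename (Nat.mul 2)) (map (apply s) K1)).
    { rewrite HK1, map_apply_comp, map_map. apply map_ext_in. intros u Hu'.
      apply apply_restrict_subst. apply HG2. simpl. auto. }
    rewrite E. apply variant_sym, variant_rename_double.
Qed.

Definition inverse (r : nat -> nat) (x : nat) : nat :=
  match excluded_middle_informative (exists y, r y = x) with
  | left H => proj1_sig (constructive_indefinite_description _ H)
  | right _ => 0
  end.

Lemma inverse_l r y : Injective r -> inverse r (r y) = y.
Proof.
  intros Hr. unfold inverse. destruct (excluded_middle_informative _) as [H | H].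
  - destruct (constructive_indefinite_description _ H) as [z Hz]. simpl. auto.
  - exfalso. eauto.
Qed.

Definition fresh_for (r : nat -> nat) (C G : goal) : Prop :=
  forall x, occurs_goal x (map (rename r) C) -> ~ occurs_goal x G.

Lemma fresh_for_add N C G :
  (forall x, occurs_goal x G -> x < N) -> fresh_for (Nat.add N) C G.
Proof.
  intros HN x Hx Hg. apply HN in Hg. apply occurs_goal_rename in Hx.
  destruct Hx as [y [_ ->]]. lia.
Qed.

Lemma occurs_rename_add x N t : occurs x (rename (Nat.add N) t) -> N <= x.
Proof. intros Hx. apply occurs_rename in Hx. destruct Hx as [y [_ ->]]. lia. Qed.

Lemma add_injective N : Injective (Nat.add N).
Proof. intros x y E. lia. Qed.

Lemma instance_standardized_apart A1 A2 C rest1 rest2 r1 r2 th :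
  Injective r2 -> fresh_for r2 C (A2 :: rest2) ->
  A1 :: rest1 = map (apply th) (A2 :: rest2) ->
  exists th', A1 :: map (rename r1) C ++ rest1 =
              map (apply th') (A2 :: map (rename r2) C ++ rest2).
Proof.
  intros Hr2 Hfr Hth.
  exists (fun x => if excluded_middle_informative (occurs_goal x (A2 :: rest2))
                   then th x else Var (r1 (inverse r2 x))).
  injection Hth as HA Hrest. cbn [map]. rewrite map_app. f_equal; [| f_equal].
  - rewrite HA. apply apply_ext. intros x Hx.
    destruct (excluded_middle_informative _) as [_ | n]; auto.
    exfalso. apply n, occurs_goal_cons. auto.
  - rewrite map_map. apply map_ext_in. intros c Hc.
    unfold rename at 2. rewrite apply_comp. apply apply_ext. intros y Hy. cbn [apply].
    destruct (excluded_middle_informative _) as [HG | _].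
    + exfalso. apply (Hfr (r2 y)); auto. apply occurs_goal_rename. exists y.
      split; auto. exists c. auto.
    + rewrite inverse_l; auto.
  - rewrite Hrest. apply map_apply_ext. intros x Hx.
    destruct (excluded_middle_informative _) as [_ | n]; auto.
    exfalso. apply n, occurs_goal_cons. auto.
Qed.

Lemma variant_standardized_apart A1 A2 C rest1 rest2 r1 r2 :
  Injective r1 -> Injective r2 ->
  fresh_for r1 C (A1 :: rest1) -> fresh_for r2 C (A2 :: rest2) ->
  variant (A1 :: rest1) (A2 :: rest2) ->
  variant (A1 :: map (rename r1) C ++ rest1) (A2 :: map (rename r2) C ++ rest2).
Proof.
  intros Hr1 Hr2 Hf1 Hf2 [[th Hth] [et Het]].
  split; eapply instance_standardized_apart; eauto.
Qed.

Lemma resolvent_variant A1 A2 H B rest1 rest2 r1 r2 s1 :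
  Injective r1 -> Injective r2 ->
  fresh_for r1 (H :: B) (A1 :: rest1) -> fresh_for r2 (H :: B) (A2 :: rest2) ->
  variant (A1 :: rest1) (A2 :: rest2) -> mgu s1 A1 (rename r1 H) ->
  exists s2, mgu s2 A2 (rename r2 H) /\
    variant (map (apply s1) (map (rename r1) B ++ rest1))
            (map (apply s2) (map (rename r2) B ++ rest2)).
Proof.
  intros Hr1 Hr2 Hf1 Hf2 HV. apply mgu_variant.
  exact (variant_standardized_apart A1 A2 (H :: B) rest1 rest2 r1 r2 Hr1 Hr2 Hf1 Hf2 HV).
Qed.

Lemma ld_step_add Prog H B A rest N s G' :
  In (H, B) Prog -> (forall x, occurs_goal x (A :: rest) -> x < N) ->
  mgu s A (rename (Nat.add N) H) ->
  map (apply s) (map (rename (Nat.add N)) B ++ rest) = G' ->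
  ld_step Prog (A :: rest) G'.
Proof.
  intros Hin HN Hmgu <-. exists A, rest, H, B, (Nat.add N), s.
  exact (conj eq_refl (conj Hin (conj (add_injective N)
           (conj (fresh_for_add N (H :: B) _ HN) (conj Hmgu eq_refl))))).
Qed.

Lemma ld_step_variant Prog G1 G2 G1' :
  variant G1 G2 -> ld_step Prog G1 G1' ->
  exists G2', ld_step Prog G2 G2' /\ variant G1' G2'.
Proof.
  intros HV (A & rest & H & B & r & s & -> & Hin & Hr & Hfr & Hmgu & ->).
  destruct G2 as [| A2 rest2]; [destruct HV as [[th Hth] _]; discriminate |].
  destruct (goal_vars_bounded (A2 :: rest2)) as [N HN].
  destruct (resolvent_variant A A2 H B rest rest2 r (Nat.add N) s) as [s2 [Hm2 HV2]];
    auto using add_injective, fresh_for_add.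
  eexists; split; [exact (ld_step_add _ _ _ _ _ N s2 _ Hin HN Hm2 eq_refl) | exact HV2].
Qed.

Lemma ld_finite_variant Prog G1 G2 :
  ld_finite Prog G1 -> variant G1 G2 -> ld_finite Prog G2.
Proof.
  intros HA. revert G2. induction HA as [G1 _ IH]. intros G2 HV. constructor.
  intros G2' Hs. destruct (ld_step_variant Prog G2 G1 G2') as [G1' [Hs1 HV1]]; auto.
  - apply variant_sym; auto.
  - apply (IH G1'); auto. apply variant_sym; auto.
Qed.

(** * The vanilla meta-interpreter *)

Lemma apply_enc_body s L : apply s (enc_body L) = enc_body (map (apply s) L).
Proof.
  induction L as [| b L IH]; [reflexivity |].
  destruct L as [| b' L]; [reflexivity |].
  change (comma (apply s b) (apply s (enc_body (b' :: L))) =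
          comma (apply s b) (enc_body (map (apply s) (b' :: L)))).
  rewrite IH. reflexivity.
Qed.

Lemma rename_enc_body r B : rename r (enc_body B) = enc_body (map (rename r) B).
Proof. apply apply_enc_body. Qed.

Lemma rename_clause_at r H B :
  rename r (clause_at H (enc_body B)) =
  clause_at (rename r H) (enc_body (map (rename r) B)).
Proof. rewrite <- rename_enc_body. reflexivity. Qed.

Lemma occurs_goal_enc_body x L : occurs_goal x L -> occurs x (enc_body L).
Proof.
  intros [b [Hb Hx]]. induction L as [| c L IH]; [destruct Hb |].
  destruct L as [| c' L].
  - destruct Hb as [<- | []]. exact Hx.
  - apply occurs_Fun. destruct Hb as [<- | Hb].
    + exists c. simpl. auto.
    + exists (enc_body (c' :: L)). simpl. auto.
Qed.

Definition usr_headed (t : term) : Prop := exists p args, t = Fun (Usr p) args.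

Lemma usr_headed_apply s t : usr_headed t -> usr_headed (apply s t).
Proof. intros (p & args & ->). exists p, (map (apply s) args). reflexivity. Qed.

Inductive encodes : goal -> goal -> Prop :=
  | encodes_nil : encodes [] []
  | encodes_cons L GM GP : Forall usr_headed L -> encodes GM GP ->
      encodes (solve (enc_body L) :: GM) (L ++ GP).

Lemma encodes_apply s GM GP :
  encodes GM GP -> encodes (map (apply s) GM) (map (apply s) GP).
Proof.
  induction 1 as [| L GM GP HL HE IH]; simpl; [constructor |].
  rewrite map_app.
  change (encodes (solve (apply s (enc_body L)) :: map (apply s) GM)
                  (map (apply s) L ++ map (apply s) GP)).
  rewrite apply_enc_body. constructor; auto.
  apply Forall_map. eapply Forall_impl; [| exact HL]. apply usr_headed_apply.
Qed.

Lemma encodes_occurs x GM GP : encodes GM GP -> occurs_goal x GP -> occurs_goal x GM.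
Proof.
  induction 1 as [| L GM GP HL HE IH]; intros Hx; auto.
  apply occurs_goal_app in Hx. apply occurs_goal_cons.
  destruct Hx as [Hx | Hx]; auto.
  left. apply occurs_Fun. exists (enc_body L). simpl. auto using occurs_goal_enc_body.
Qed.

(* The second constructor is the state reached after [solve(A)] has been resolved
   with the third clause of [M0]: [A] waits for its program clause. *)
Inductive corresponds : goal -> goal -> Prop :=
  | corresponds_encodes GM GP : encodes GM GP -> corresponds GM GP
  | corresponds_pending A v GM GP :
      encodes GM GP -> ~ occurs v A -> ~ occurs_goal v GM ->
      corresponds (clause_at A (Var v) :: solve (Var v) :: GM) (A :: GP).

Lemma pending_occurs x A v GM GP :
  encodes GM GP -> occurs_goal x (A :: GP) ->
  occurs_goal x (clause_at A (Var v) :: solve (Var v) :: GM).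
Proof.
  intros HE Hx. rewrite !occurs_goal_cons. apply occurs_goal_cons in Hx.
  destruct Hx as [Hx | Hx].
  - left. apply occurs_Fun. exists A. simpl. auto.
  - right; right. eapply encodes_occurs; eauto.
Qed.

Fixpoint weight (t : term) : nat :=
  match t with
  | Var _ => 0
  | Fun Comma [a; b] => S (weight a + weight b)
  | Fun _ _ => 1
  end.

Definition solve_weight (A : term) : nat :=
  match A with Fun SolveS [t] => weight t | _ => 0 end.

(* Decreases along the bookkeeping steps of [M0]. *)
Definition goal_weight (G : goal) : nat := list_sum (map solve_weight G).

Lemma mgu_clause_at_Var s A H E v :
  ~ occurs v A -> ~ occurs v H -> ~ occurs v E -> mgu s A H ->
  mgu (upd s v (apply s E)) (clause_at A (Var v)) (clause_at H E).
Proof.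
  intros HA HH HE [Hu Hg]. split.
  - unfold unifier. cbn [apply map clause_at].
    rewrite !apply_upd_notin, upd_eq, Hu by auto. reflexivity.
  - intros u Hu'. injection Hu' as HuA HuE. destruct (Hg u HuA) as [d Hd].
    exists d. intros x. destruct (Nat.eq_dec x v) as [-> | Hx].
    + rewrite upd_eq, HuE, apply_comp. apply apply_ext. auto.
    + rewrite upd_neq; auto.
Qed.

Lemma mgu_clause_at_Var_inv s A H E v :
  ~ occurs v A -> ~ occurs v H -> ~ occurs v E ->
  mgu s (clause_at A (Var v)) (clause_at H E) ->
  mgu (restrict_subst (fun x => x <> v) s) A H.
Proof.
  intros HA HH HE [Hu Hg]. injection Hu as HuA _.
  apply mgu_restrict_subst; [intros x Hx ->; contradiction .. | exact HuA |].
  intros u Hu. destruct (Hg (upd u v (apply u E))) as [d Hd].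
  - unfold unifier. cbn [apply map clause_at].
    rewrite !apply_upd_notin, upd_eq, Hu by auto. reflexivity.
  - exists d. intros x Hx. rewrite <- Hd, upd_neq; auto.
Qed.

Section Vanilla.

Variable P : program.
Local Notation MP := (M0 ++ ce P).

Lemma meta_clause_cases Hc Bc :
  In (Hc, Bc) MP ->
  (Hc = solve true_t /\ Bc = []) \/
  (Hc = solve (comma (Var 0) (Var 1)) /\ Bc = [solve (Var 0); solve (Var 1)]) \/
  (Hc = solve (Var 0) /\ Bc = [clause_at (Var 0) (Var 1); solve (Var 1)]) \/
  (exists H B, In (H, B) P /\ Hc = clause_at H (enc_body B) /\ Bc = []).
Proof.
  intros Hin. apply in_app_or in Hin. destruct Hin as [Hin | Hin].
  - destruct Hin as [E | [E | [E | []]]]; injection E; intros; subst; auto.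
  - right; right; right. apply in_map_iff in Hin. destruct Hin as [[H B] [E Hin]].
    injection E; intros; subst. eauto.
Qed.

Lemma true_resolvent r G :
  mgu Var (solve true_t) (rename r (solve true_t)) /\
  map (apply Var) (map (rename r) [] ++ G) = G.
Proof.
  split; [| apply map_apply_Var].
  apply mgu_match; [reflexivity | reflexivity | intros x [[] | []]].
Qed.

Lemma comma_resolvent r a b G :
  Injective r ->
  fresh_for r [solve (comma (Var 0) (Var 1)); solve (Var 0); solve (Var 1)]
    (solve (comma a b) :: G) ->
  exists s0, mgu s0 (solve (comma a b)) (rename r (solve (comma (Var 0) (Var 1)))) /\
    map (apply s0) (map (rename r) [solve (Var 0); solve (Var 1)] ++ G) =
    solve a :: solve b :: G.
Proof.
  intros Hr Hfr.
  assert (Hr10 : r 1 <> r 0) by (intros E; apply Hr in E; discriminate).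
  assert (Hp : forall x, occurs x (rename r (solve (comma (Var 0) (Var 1)))) ->
                 x = r 0 \/ x = r 1).
  { intros x Hx. apply occurs_rename in Hx. destruct Hx as [y [Hy ->]].
    cbn in Hy. intuition congruence. }
  assert (Hfresh : forall x, occurs_goal x (solve (comma a b) :: G) ->
                     x <> r 0 /\ x <> r 1).
  { intros x Hx. split; intros ->; revert Hx; apply Hfr;
      apply occurs_goal_cons; left; cbn; auto. }
  set (s0 := upd (upd Var (r 0) a) (r 1) b).
  assert (Hout : forall x, x <> r 0 -> x <> r 1 -> s0 x = Var x).
  { intros x H0 H1. unfold s0. rewrite !upd_neq; auto. }
  exists s0. split.
  - apply mgu_match.
    + cbn. unfold s0. rewrite upd_neq, !upd_eq by congruence. reflexivity.
    + intros x Hx. apply Hout; intros ->; apply Hx; cbn; auto.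
    + intros x Hx Hx'.
      destruct (Hfresh x) as [H0 H1]; [apply occurs_goal_cons; auto |].
      destruct (Hp x Hx'); auto.
  - cbn [map app]. unfold s0 at 1 2. cbn [apply map rename solve].
    rewrite upd_eq, upd_neq, upd_eq by congruence. do 2 f_equal.
    rewrite <- (map_apply_Var G) at 2. apply map_apply_ext. intros x Hx.
    apply Hout; apply Hfresh; apply occurs_goal_cons; auto.
Qed.

Lemma atom_resolvent r t G :
  Injective r ->
  fresh_for r [solve (Var 0); clause_at (Var 0) (Var 1); solve (Var 1)] (solve t :: G) ->
  exists s0, mgu s0 (solve t) (rename r (solve (Var 0))) /\
    map (apply s0) (map (rename r) [clause_at (Var 0) (Var 1); solve (Var 1)] ++ G) =
    clause_at t (Var (r 1)) :: solve (Var (r 1)) :: G.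
Proof.
  intros Hr Hfr.
  assert (Hr10 : r 1 <> r 0) by (intros E; apply Hr in E; discriminate).
  assert (Hfresh : forall x, occurs_goal x (solve t :: G) -> x <> r 0).
  { intros x Hx ->. revert Hx. apply Hfr. apply occurs_goal_cons. left. cbn. auto. }
  set (s0 := upd Var (r 0) t).
  exists s0. split.
  - apply mgu_match.
    + cbn. unfold s0. rewrite upd_eq. reflexivity.
    + intros x Hx. apply upd_neq. intros ->. apply Hx. cbn. auto.
    + intros x Hx Hx'. cbn in Hx'. destruct Hx' as [-> | []].
      apply (Hfresh (r 0)); auto. apply occurs_goal_cons. left. cbn. auto.
  - cbn [map app]. unfold s0 at 1 2 3. cbn [apply map rename solve clause_at].
    rewrite upd_eq, upd_neq by congruence. do 3 f_equal.
    rewrite <- (map_apply_Var G) at 2. apply map_apply_ext. intros x Hx.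
    apply upd_neq, Hfresh. apply occurs_goal_cons; auto.
Qed.

Lemma meta_step_encodes A GM GP :
  encodes (A :: GM) GP -> exists GM', ld_step MP (A :: GM) GM' /\ corresponds GM' GP.
Proof.
  intros HE. inversion HE as [| L GM0 GP0 HL HE' EA EGP]; subst.
  destruct (goal_vars_bounded (solve (enc_body L) :: GM)) as [N HN].
  destruct L as [| b [| b' L]].
  - destruct (true_resolvent (Nat.add N) GM) as [Hm E].
    exists GM. split; [| constructor; auto].
    eapply ld_step_add; [| exact HN | exact Hm | exact E]. simpl. auto.
  - destruct (atom_resolvent (Nat.add N) b GM (add_injective N) (fresh_for_add N _ _ HN))
      as [s0 [Hm E]].
    exists (clause_at b (Var (N + 1)) :: solve (Var (N + 1)) :: GM). split.
    + eapply ld_step_add; [| exact HN | exact Hm | exact E]. simpl. auto.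
    + constructor; auto; intros Hx.
      * enough (N + 1 < N) by lia. apply HN. exists (solve b). simpl. auto.
      * enough (N + 1 < N) by lia. apply HN, occurs_goal_cons. auto.
  - destruct (comma_resolvent (Nat.add N) b (enc_body (b' :: L)) GM (add_injective N)
                (fresh_for_add N _ _ HN)) as [s0 [Hm E]].
    exists (solve b :: solve (enc_body (b' :: L)) :: GM). split.
    + eapply ld_step_add; [| exact HN | exact Hm | exact E]. simpl. auto.
    + apply Forall_cons_iff in HL as [Hb HL']. constructor.
      apply (encodes_cons [b]); [constructor; auto | exact (encodes_cons _ _ _ HL' HE')].
Qed.

Lemma meta_step_solve_inv f ts G G' :
  ld_step MP (solve (Fun f ts) :: G) G' ->
  (Fun f ts = true_t /\ variant G' G) \/
  (exists a b, Fun f ts = comma a b /\ variant G' (solve a :: solve b :: G)) \/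
  (exists v, ~ occurs v (Fun f ts) /\ ~ occurs_goal v G /\
     variant G' (clause_at (Fun f ts) (Var v) :: solve (Var v) :: G)).
Proof.
  intros (A & rest & Hc & Bc & r & s & HG & Hin & Hr & Hfr & Hm & ->).
  injection HG as <- <-. pose proof (proj1 Hm) as Hu.
  destruct (meta_clause_cases _ _ Hin)
    as [[-> ->] | [[-> ->] | [[-> ->] | (H & B & _ & -> & ->)]]]; cbn in Hu.
  - injection Hu as -> Hts. apply map_eq_nil in Hts as ->. left. split; [reflexivity |].
    destruct (true_resolvent r G) as [Hm0 E]. rewrite <- E at 2.
    eapply mgu_unique_variant; eauto.
  - injection Hu as -> Hts. destruct ts as [| a [| b []]]; try discriminate.
    right; left. exists a, b. split; [reflexivity |].
    destruct (comma_resolvent r a b G Hr Hfr) as [s0 [Hm0 <-]].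
    eapply mgu_unique_variant; eauto.
  - right; right. exists (r 1).
    assert (Hr1 : ~ occurs_goal (r 1) (solve (Fun f ts) :: G)).
    { apply Hfr, occurs_goal_cons. right.
      exists (rename r (clause_at (Var 0) (Var 1))). cbn. auto. }
    split; [| split].
    + intros Hx. apply Hr1, occurs_goal_cons. left. cbn. auto.
    + intros Hx. apply Hr1, occurs_goal_cons. auto.
    + destruct (atom_resolvent r (Fun f ts) G Hr Hfr) as [s0 [Hm0 <-]].
      eapply mgu_unique_variant; eauto.
  - discriminate Hu.
Qed.

Hypothesis HP : user_program P.

Lemma ld_finite_clause_at_stuck f ts b G :
  (forall p, f <> Usr p) -> ld_finite MP (clause_at (Fun f ts) b :: G).
Proof.
  intros Hf. constructor.
  intros G' (A & rest & Hc & Bc & r & s & HG & Hin & _ & _ & [Hu _] & _).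
  injection HG as <- _.
  destruct (meta_clause_cases _ _ Hin)
    as [[-> _] | [[-> _] | [[-> _] | (H & B & HinP & -> & _)]]]; try discriminate Hu.
  destruct (HP _ HinP) as [(p & args & EH & _) _]. cbn in EH. subst H.
  rewrite rename_clause_at in Hu. cbn in Hu. injection Hu as Hf' _.
  destruct (Hf p Hf').
Qed.

Lemma encodes_resolvent H B r s GM GP :
  In (H, B) P -> encodes GM GP ->
  encodes (solve (enc_body (map (apply s) (map (rename r) B))) :: map (apply s) GM)
          (map (apply s) (map (rename r) B) ++ map (apply s) GP).
Proof.
  intros Hin HE. constructor; [| apply encodes_apply; auto].
  apply Forall_forall. intros u Hu. rewrite map_map in Hu.
  apply in_map_iff in Hu. destruct Hu as [b [<- Hb]].
  destruct (proj2 (HP _ Hin) b Hb) as (p & args & -> & _).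
  exists p, (map (apply s) (map (rename r) args)). reflexivity.
Qed.

Lemma object_step_lift_pending A v GM GP GP0 GP1 :
  encodes GM GP -> ~ occurs v A -> ~ occurs_goal v GM ->
  variant (A :: GP) GP0 -> ld_step P GP0 GP1 ->
  exists GM1 X, ld_step MP (clause_at A (Var v) :: solve (Var v) :: GM) GM1 /\
    encodes GM1 X /\ variant X GP1.
Proof.
  intros HE HvA Hv HV (A1 & rest1 & H & B & r1 & s1 & -> & Hin & Hr1 & Hfr1 & Hm1 & ->).
  destruct (goal_vars_bounded (clause_at A (Var v) :: solve (Var v) :: GM)) as [N HN].
  assert (HvN : v < N) by (apply HN, occurs_goal_cons; left; cbn; auto).
  destruct (resolvent_variant A1 A H B rest1 GP r1 (Nat.add N) s1) as [s [Hm HVr]];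
    auto using add_injective, variant_sym.
  { apply fresh_for_add. intros x Hx. apply HN. eapply pending_occurs; eauto. }
  set (rB := map (rename (Nat.add N)) B) in *.
  exists (solve (enc_body (map (apply s) rB)) :: map (apply s) GM),
         (map (apply s) rB ++ map (apply s) GP).
  split; [| split; [eapply encodes_resolvent; eauto |]].
  2: rewrite <- map_app; apply variant_sym; auto.
  apply (ld_step_add _ (clause_at H (enc_body B)) [] _ _ N
           (upd s v (apply s (enc_body rB)))).
  - apply in_or_app. right. apply in_map_iff. exists (H, B). auto.
  - exact HN.
  - rewrite rename_clause_at. apply mgu_clause_at_Var; auto.
    + intros Hx. apply occurs_rename_add in Hx. lia.
    + rewrite <- rename_enc_body. intros Hx. apply occurs_rename_add in Hx. lia.
  - cbn [map app apply solve]. rewrite upd_eq, apply_enc_body. f_equal.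
    apply map_apply_ext. intros x Hx. apply upd_neq. intros ->. contradiction.
Qed.

Lemma meta_step_pending_inv A v GM GP G' :
  encodes GM GP -> ~ occurs v A -> ~ occurs_goal v GM ->
  ld_step MP (clause_at A (Var v) :: solve (Var v) :: GM) G' ->
  exists X, ld_step P (A :: GP) (map (rename (Nat.mul 2)) X) /\ encodes G' X.
Proof.
  set (GM0 := clause_at A (Var v) :: solve (Var v) :: GM).
  intros HE HvA Hv (A' & rest & Hc & Bc & r & s & HG & Hin & Hr & Hfr & Hm & ->).
  injection HG as <- <-.
  destruct (meta_clause_cases _ _ Hin)
    as [[-> ->] | [[-> ->] | [[-> ->] | (H & B & HinP & -> & ->)]]];
    try (destruct Hm as [Hu _]; discriminate Hu).
  rewrite rename_clause_at in Hm.
  set (rB := map (rename r) B) in *.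
  assert (Hfresh : forall x, occurs x (rename r H) \/ occurs x (enc_body rB) ->
                     ~ occurs_goal x GM0).
  { intros x Hx. apply Hfr. exists (rename r (clause_at H (enc_body B))).
    rewrite rename_clause_at. split; [left; reflexivity |].
    apply occurs_Fun.
    destruct Hx; [exists (rename r H) | exists (enc_body rB)]; cbn; auto. }
  assert (HvGM0 : occurs_goal v GM0) by (apply occurs_goal_cons; left; cbn; auto).
  assert (HvGP : ~ occurs_goal v GP)
    by (intros Hx; apply Hv; eapply encodes_occurs; eauto).
  exists (map (apply s) rB ++ map (apply s) GP). split.
  - exists A, GP, H, B, r, (restrict_subst (fun x => x <> v) s).
    split; [reflexivity | split; [exact HinP | split; [exact Hr | split; [| split]]]].
    + intros x Hx Hx'. apply occurs_goal_cons in Hx.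
      apply (Hfresh x); [| eapply pending_occurs; eauto].
      destruct Hx as [Hx | Hx]; auto using occurs_goal_enc_body.
    + apply mgu_clause_at_Var_inv with (E := enc_body rB); auto;
        intros Hx; apply (Hfresh v); auto.
    + fold rB. rewrite !map_app, !map_map. f_equal; apply map_ext_in; intros u Hu;
        symmetry; apply apply_restrict_subst; intros x Hx ->.
      * apply (Hfresh v); auto. right. apply occurs_goal_enc_body. exists u. auto.
      * apply HvGP. exists u. auto.
  - destruct Hm as [Hu _]. injection Hu as _ Hsv.
    cbn [map app apply solve]. rewrite Hsv, apply_enc_body.
    eapply encodes_resolvent; eauto.
Qed.

Lemma meta_step_encodes_inv GM GP G' :
  encodes GM GP -> ld_step MP GM G' ->
  ld_finite MP G' \/
  exists GM', goal_weight GM' < goal_weight GM /\ corresponds GM' GP /\ variant G' GM'.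
Proof.
  intros HE Hs. destruct HE as [| L GM GP HL HE].
  { destruct Hs as (A & rest & _ & _ & _ & _ & E & _). discriminate. }
  assert (Hstuck : forall f ts v, (forall p, f <> Usr p) ->
            variant G' (clause_at (Fun f ts) (Var v) :: solve (Var v) :: GM) ->
            ld_finite MP G').
  { intros f ts v Hf HV. eapply ld_finite_variant; [| apply variant_sym; eauto].
    apply ld_finite_clause_at_stuck; auto. }
  destruct L as [| b [| b' L]].
  - destruct (meta_step_solve_inv TrueS [] GM G' Hs)
      as [[_ HV] | [(a & c & E & _) | (v & _ & _ & HV)]]; [| discriminate E |].
    + right. exists GM.
      split; [unfold goal_weight, list_sum; cbn; lia | split; [constructor |]; auto].
    + left. eapply Hstuck; eauto. discriminate.
  - apply Forall_cons_iff in HL as [(p & args & ->) _].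
    destruct (meta_step_solve_inv _ _ GM G' Hs)
      as [[E _] | [(a & c & E & _) | (v & Hv1 & Hv2 & HV)]]; try discriminate E.
    right. exists (clause_at (Fun (Usr p) args) (Var v) :: solve (Var v) :: GM).
    split; [unfold goal_weight, list_sum; cbn; lia |].
    split; [apply corresponds_pending |]; auto.
  - apply Forall_cons_iff in HL as [Hb HL].
    destruct (meta_step_solve_inv _ _ GM G' Hs)
      as [[E _] | [(a & c & E & HV) | (v & _ & _ & HV)]]; [discriminate E | |].
    + injection E as <- <-. right.
      exists (solve b :: solve (enc_body (b' :: L)) :: GM).
      split; [unfold goal_weight, list_sum; cbn; lia |]. split; auto. constructor.
      apply (encodes_cons [b]); [constructor; auto | exact (encodes_cons _ _ _ HL HE)].
    + left. eapply Hstuck; eauto. discriminate.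
Qed.

Lemma meta_finite_of_object GP :
  ld_finite P GP ->
  forall GM GP0, corresponds GM GP0 -> variant GP0 GP -> ld_finite MP GM.
Proof.
  induction 1 as [GP _ IHobj]. intros GM.
  induction GM as [GM IHw] using (induction_ltof1 _ goal_weight). intros GP0 HC HV.
  constructor. intros G' Hs. destruct HC as [GM GP0 HE | A v GM GP0 HE HvA Hv].
  - destruct (meta_step_encodes_inv _ _ _ HE Hs) as [Hfin | (GM' & Hw & HC & HV')];
      [exact Hfin |].
    apply ld_finite_variant with GM'; [apply (IHw GM' Hw GP0) | apply variant_sym]; auto.
  - destruct (meta_step_pending_inv _ _ _ _ _ HE HvA Hv Hs) as [X [HsP HX]].
    destruct (ld_step_variant P _ _ _ HV HsP) as [GP' [Hs' HV']].
    apply (IHobj GP' Hs' G' X); [constructor; auto |].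
    eapply variant_trans; [apply variant_sym, variant_rename_double | exact HV'].
Qed.

Lemma object_finite_of_meta GM :
  ld_finite MP GM ->
  forall GP0 GP, corresponds GM GP0 -> variant GP0 GP -> ld_finite P GP.
Proof.
  induction 1 as [GM _ IH]. intros GP0 GP HC HV.
  destruct HC as [GM GP0 HE | A v GM GP0 HE HvA Hv].
  - destruct GM as [| A GM].
    + inversion HE; subst. destruct HV as [_ [et ->]]. constructor.
      intros G' (A & rest & _ & _ & _ & _ & E & _). discriminate.
    + destruct (meta_step_encodes _ _ _ HE) as [GM' [Hs HC]].
      exact (IH GM' Hs GP0 GP HC HV).
  - constructor. intros GP1 Hs.
    destruct (object_step_lift_pending _ _ _ _ _ _ HE HvA Hv HV Hs)
      as (GM1 & X & Hs1 & HX & HVX).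
    exact (IH GM1 Hs1 X GP1 (corresponds_encodes _ _ HX) HVX).
Qed.

End Vanilla.

Theorem mainTheorem3 (P : program) (Q0 : term) :
  user_program P -> user_atom Q0 ->
  (ld_finite P [Q0] <-> ld_finite (M0 ++ ce P) [solve Q0]).
Proof.
  intros HP HQ.
  assert (HC : corresponds [solve Q0] [Q0]).
  { constructor. apply (encodes_cons [Q0] [] []); constructor; [| constructor].
    destruct HQ as (p & args & E & _). exists p, args. exact E. }
  split; intros Hfin.
  - exact (meta_finite_of_object P HP [Q0] Hfin _ _ HC (variant_refl _)).
  - exact (object_finite_of_meta P HP _ Hfin _ _ HC (variant_refl _)).
Qed.
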